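(* Let $P$ be a finite poset and $R$ a commutative unital ring. Then $Z^3_3(P,R)=J^3_2(P,R)$. In particular, $Z^3_3(P,R)$ is an ideal of $I^3(P,R)$.
   Context: For a finite poset $P$, $P^3_\le=\{(x,y,z)\in P^3: x\le y\le z\}$, and $I^3(P,R)$ is the $R$-module of functions $f:P^3_\le\to R$ with multiplication $(fg)(x_1,x_2,x_3)=\sum f(x_1,y_1,y_2)g(y_1,y_2,x_3)$ over all $x_1\le y_1\le x_2\le y_2\le x_3$. For $a\le b$, $l(a,b)$ is the maximum of $|C|-1$ over chains $C$ in the interval $[a,b]$. $J^3_k(P,R)=\{f: f(x_1,x_2,x_3)=0 \text{ whenever } l(x_1,x_3)<k\}$. $[f,g]=fg-gf$; for subsets $U,V$, $[U,V]$ is the $R$-submodule spanned by all $[u,v]$, $u\in U,v\in V$. $Z^3_1(P,R)=J^3_1(P,R)$, $Z^3_2(P,R)=[Z^3_1(P,R),Z^3_1(P,R)]$, $Z^3_3(P,R)=[Z^3_2(P,R),Z^3_2(P,R)]$. *)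

From HB Require Import structures.
From mathcomp Require Import all_boot all_order all_algebra.
Set Implicit Arguments. Unset Strict Implicit. Unset Printing Implicit Defensive.
Import Order.TTheory GRing.Theory.
Local Open Scope ring_scope.
Local Open Scope order_scope.

Section Incidence3.
Variables (d : Order.disp_t) (P : finPOrderType d) (R : comPzRingType).

(* P^3_<= = {(x,y,z) : x <= y <= z}, encoded as ((x,y),z). *)
Definition chain3 := {t : P * P * P | (t.1.1 <= t.1.2) && (t.1.2 <= t.2)}.

Local Notation I3 := {ffun chain3 -> R}.

(* value of f at (x,y,z), 0 if (x,y,z) is not in P^3_<= (never used then) *)
Definition ev (f : I3) (x y z : P) : R :=
  match @insub _ (fun t : P * P * P => (t.1.1 <= t.1.2) && (t.1.2 <= t.2))
               chain3 (x, y, z) with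
  | Some t => f t
  | None => 0
  end.

Definition mul3 (f g : I3) : I3 :=
  [ffun t : chain3 =>
     let: (x1, x2, x3) := val t in
     \sum_(y1 : P | ((x1 <= y1) && (y1 <= x2))%O)
       \sum_(y2 : P | ((x2 <= y2) && (y2 <= x3))%O) ev f x1 y1 y2 * ev g y1 y2 x3].

Definition scale3 (r : R) (f : I3) : I3 := [ffun t => r * f t].

Definition bracket3 (f g : I3) : I3 := mul3 f g - mul3 g f.

(* [U,V]: the R-submodule spanned by all [u,v], u in U, v in V *)
Definition brackets (U V : I3 -> Prop) (h : I3) : Prop :=
  exists s : seq (R * I3 * I3),
    (forall p, p \in s -> U p.1.2 /\ V p.2) /\
    h = \sum_(p <- s) scale3 p.1.1 (bracket3 p.1.2 p.2).

Definition is_chain (C : {set P}) : bool :=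
  [forall x in C, forall y in C, (x <= y) || (y <= x)].

Definition lenP (a b : P) : nat :=
  (\max_(C : {set P} | is_chain C && (C \subset [set x | ((a <= x) && (x <= b))%O])) #|C|) - 1.

Definition J3 (k : nat) (f : I3) : Prop :=
  forall t : chain3, (lenP (val t).1.1 (val t).2 < k)%N -> f t = 0.

Definition Z3_1 : I3 -> Prop := J3 1.
Definition Z3_2 : I3 -> Prop := brackets Z3_1 Z3_1.
Definition Z3_3 : I3 -> Prop := brackets Z3_2 Z3_2.

End Incidence3.

Notation I3 P R := {ffun chain3 P -> R}.

(* Call h balanced if h(p,p,q) = h(p,q,q) whenever p < q and
   l(p,q) = 1. The bracket of two elements of J^3_1 (which vanish on the
   diagonal) is balanced, so Z^3_2 consists of balanced elements of J^3_1.
   For such u, v and x < z with l(x,z) = 1 one has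
   (uv)(x,y,z) = u(x,x,z) v(x,z,z), so [u,v](x,y,z) = 0 because R is
   commutative; hence Z^3_3 is contained in J^3_2.
   Conversely, write e_abc = delta3 a b c for the point masses and
   D_ac = full3 a c for the indicator of the triples (a,y,c). For p < s and
   a < b < c:
     [e_pps, e_pss] = D_ps,          [D_ab, D_bc] = e_abc,
     [D_ab, e_abc] = sum_(a<=y<=b) e_ayc,   [e_abc, D_bc] = sum_(b<=y<=c) e_ayc.
   The first two put D and e_abc in Z^3_2 and e_abc in Z^3_3; the last two then
   give e_aac and e_acc. So every e_ayc with l(a,c) >= 2 lies in Z^3_3, whence
   J^3_2 is contained in Z^3_3. Finally every J^3_k is an ideal, since
   shrinking an interval does not increase l. *)

From HB Require Import structures.
From mathcomp Require Import all_boot all_order all_algebra.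
Set Implicit Arguments. Unset Strict Implicit. Unset Printing Implicit Defensive.
Import Order.TTheory GRing.Theory.
Local Open Scope ring_scope.

Section Incidence3.
Variables (d : Order.disp_t) (P : finPOrderType d) (R : comPzRingType).
Local Open Scope order_scope.
Local Notation I3 := {ffun chain3 P -> R}.
Implicit Types (f g u v : I3) (a b c p q x y z : P).

Lemma ev_chain f x y z (xyz : x <= y <= z) : ev f x y z = f (Sub (x, y, z) xyz).
Proof. by rewrite /ev insubT. Qed.

Lemma ev_nchain f x y z : ~~ (x <= y <= z) -> ev f x y z = 0.
Proof. by move=> xyz; rewrite /ev insubF //; apply: negbTE. Qed.

Lemma ev_val f (t : chain3 P) : ev f (val t).1.1 (val t).1.2 (val t).2 = f t.
Proof. by case: t => [[[x y] z] xyz]; rewrite ev_chain; congr (f _); apply: val_inj. Qed.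

Lemma eq_ev f g :
  (forall x y z, x <= y <= z -> ev f x y z = ev g x y z) -> f = g.
Proof. by move=> efg; apply/ffunP => t; rewrite -!ev_val efg //; case: t. Qed.

Lemma ev0 x y z : ev (0 : I3) x y z = 0.
Proof. by rewrite /ev; case: insub => // t; rewrite ffunE. Qed.

Lemma evB f g x y z : ev (f - g) x y z = ev f x y z - ev g x y z.
Proof.
have [xyz|xyz] := boolP (x <= y <= z); last by rewrite !ev_nchain ?subr0.
by rewrite !(ev_chain _ xyz) !ffunE.
Qed.

Lemma evD f g x y z : ev (f + g) x y z = ev f x y z + ev g x y z.
Proof.
have [xyz|xyz] := boolP (x <= y <= z); last by rewrite !ev_nchain ?addr0.
by rewrite !(ev_chain _ xyz) ffunE.
Qed.

Lemma evZ r f x y z : ev (scale3 r f) x y z = r * ev f x y z.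
Proof.
have [xyz|xyz] := boolP (x <= y <= z); last by rewrite !ev_nchain ?mulr0.
by rewrite !(ev_chain _ xyz) ffunE.
Qed.

Lemma ev_mul3 f g x1 x2 x3 : x1 <= x2 <= x3 ->
  ev (mul3 f g) x1 x2 x3 =
  \sum_(y1 | (x1 <= y1 <= x2)%O) \sum_(y2 | (x2 <= y2 <= x3)%O) ev f x1 y1 y2 * ev g y1 y2 x3.
Proof. by move=> x123; rewrite (ev_chain _ x123) ffunE. Qed.

Record submodule3 (Q : I3 -> Prop) : Prop := Submodule3 {
  submod0 : Q 0;
  submodD : forall f g, Q f -> Q g -> Q (f + g);
  submodZ : forall r f, Q f -> Q (scale3 r f) }.

Section Submodule.
Variables (Q : I3 -> Prop) (subQ : submodule3 Q).

Lemma submodB f g : Q f -> Q g -> Q (f - g).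
Proof.
move=> Qf Qg; apply: submodD => //.
have -> : - g = scale3 (-1) g by apply/ffunP => t; rewrite !ffunE mulN1r.
exact: submodZ.
Qed.

Lemma submod_sum (I : finType) (C : pred I) (F : I -> I3) :
  (forall i, C i -> Q (F i)) -> Q (\sum_(i | C i) F i).
Proof. by move=> QF; apply: big_ind => //; [apply: submod0 | apply: submodD]. Qed.

Lemma submod_sum_term (I : finType) (C : pred I) (F : I -> I3) i0 : C i0 ->
  Q (\sum_(i | C i) F i) -> (forall i, C i -> i != i0 -> Q (F i)) -> Q (F i0).
Proof.
move=> Ci0; rewrite (bigD1 i0) //= => QS QF.
have -> : F i0 = F i0 + \sum_(i | C i && (i != i0)) F i - \sum_(i | C i && (i != i0)) F i.
  by rewrite addrK.
by apply: submodB => //; apply: submod_sum => i /andP[]; apply: QF.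
Qed.

End Submodule.

Section Brackets.
Variables U V : I3 -> Prop.

Lemma brackets_submod : submodule3 (brackets U V).
Proof.
split.
- by exists [::]; rewrite big_nil.
- move=> _ _ [s1 [UV1 ->]] [s2 [UV2 ->]]; exists (s1 ++ s2).
  split; last by rewrite big_cat.
  by move=> w; rewrite mem_cat => /orP[]; [apply: UV1 | apply: UV2].
move=> r _ [s [UV ->]]; exists [seq (r * w.1.1, w.1.2, w.2) | w <- s]; split.
  by move=> _ /mapP[w sw ->]; apply: UV sw.
apply/ffunP => t; rewrite big_map !ffunE !sum_ffunE mulr_sumr.
by apply: eq_bigr => w _; rewrite !ffunE mulrA.
Qed.

Lemma brackets_bracket3 u v : U u -> V v -> brackets U V (bracket3 u v).
Proof.
move=> Uu Vv; exists [:: (1, u, v)]; split; first by move=> w; rewrite inE => /eqP->.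
by rewrite big_seq1; apply/ffunP => t; rewrite [RHS]ffunE mul1r.
Qed.

Lemma brackets_min (Q : I3 -> Prop) : submodule3 Q ->
  (forall u v, U u -> V v -> Q (bracket3 u v)) -> forall f, brackets U V f -> Q f.
Proof.
move=> subQ QUV _ [s [UV ->]]; rewrite big_seq.
apply: (big_ind Q); [exact: submod0 | exact: submodD |].
by move=> w /UV[Uw Vw]; apply: submodZ => //; apply: QUV.
Qed.

End Brackets.

Lemma lenP_ge_chain a b (C : {set P}) :
  is_chain C -> C \subset [set x | (a <= x <= b)%O] -> (#|C| - 1 <= lenP a b)%N.
Proof. by move=> chC sCab; apply: leq_sub2r; apply: leq_bigmax_cond; rewrite chC. Qed.

Lemma lenP_le_interval a b : (lenP a b <= #|[set x | (a <= x <= b)%O]| - 1)%N.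
Proof.
by apply: leq_sub2r; apply/bigmax_leqP => C /andP[_ sCab]; apply: subset_leq_card.
Qed.

Lemma lenP_mono a a' b b' : a <= a' -> b' <= b -> (lenP a' b' <= lenP a b)%N.
Proof.
move=> aa' bb'; apply/leq_sub2r/bigmax_leqP => C /andP[chC sC].
apply: leq_bigmax_cond; rewrite chC; apply: subset_trans sC _.
apply/subsetP => x; rewrite !inE => /andP[ax xb].
by rewrite (le_trans aa' ax) (le_trans xb bb').
Qed.

Lemma is_chain3 a b c : a <= b -> b <= c -> is_chain [set a; b; c].
Proof.
move=> ab bc; have ac := le_trans ab bc.
apply/forall_inP => x Cx; apply/forall_inP => y Cy.
move: Cx Cy; rewrite !inE => /orP[/orP[]|]/eqP-> /orP[/orP[]|]/eqP->;
by rewrite ?lexx ?ab ?bc ?ac ?orbT.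
Qed.

Lemma lenP_gt0 a b : a < b -> (0 < lenP a b)%N.
Proof.
move=> ab; have := @lenP_ge_chain a b _ (is_chain3 (lexx a) (ltW ab)).
rewrite setUid cards2 (lt_eqF ab); apply.
by apply/subsetP => x; rewrite !inE => /orP[]/eqP->; rewrite lexx (ltW ab).
Qed.

Lemma lenPxx x : lenP x x = 0%N.
Proof.
apply/eqP; rewrite -leqn0; apply: leq_trans (lenP_le_interval x x) _.
suff -> : [set y | (x <= y <= x)%O] = [set x] by rewrite cards1.
by apply/setP => y; rewrite !inE -eq_le eq_sym.
Qed.

Lemma lenP_ge2P a c : reflect (exists b, a < b < c) (2 <= lenP a c)%N.
Proof.
apply: (iffP idP) => [lac | [b /andP[ab bc]]]; last first.
  apply: leq_trans (lenP_ge_chain (is_chain3 (ltW ab) (ltW bc)) _).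
    by rewrite -setUA cardsU1 cards2 !inE (lt_eqF ab) (lt_eqF (lt_trans ab bc)) (lt_eqF bc).
  apply/subsetP => x; rewrite !inE => /orP[/orP[]|]/eqP->;
  by rewrite ?lexx ?(ltW ab) ?(ltW bc) ?(ltW (lt_trans ab bc)).
have [b abc|nb] := pickP (fun b => a < b < c); first by exists b.
suff : (lenP a c < 2)%N by rewrite ltnNge lac.
have sub : [set x | (a <= x <= c)%O] \subset [set a; c].
  apply/subsetP => x; rewrite !inE => /andP[ax xc]; have /negbT := nb x.
  by rewrite !lt_def ax xc !andbT negb_and !negbK [c == x]eq_sym.
apply: leq_ltn_trans (lenP_le_interval a c) _.
apply: leq_ltn_trans (leq_sub2r 1 (subset_leq_card sub)) _.
by rewrite cards2; case: (a != c).
Qed.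

Lemma lenP_lt2_interval a c y : (lenP a c < 2)%N -> a <= y <= c -> (y == a) || (y == c).
Proof.
move=> lac /andP[ay yc]; apply: contraTT lac; rewrite negb_or -leqNgt => /andP[ya yc'].
by apply/lenP_ge2P; exists y; rewrite !lt_def ay yc ya eq_sym yc'.
Qed.

Lemma J3_ev k f : J3 k f <-> forall x y z, (lenP x z < k)%N -> ev f x y z = 0.
Proof.
split=> [Jf x y z lxz | Jf t ltk]; last by rewrite -ev_val; apply: Jf.
have [xyz|xyz] := boolP (x <= y <= z); last by rewrite ev_nchain.
by rewrite ev_chain; apply: Jf.
Qed.

Lemma J3_submod k : submodule3 (J3 k).
Proof.
split=> [t _ | f g Jf Jg t ltk | r f Jf t ltk]; rewrite ffunE //.
  by rewrite Jf ?Jg ?addr0.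
by rewrite Jf ?mulr0.
Qed.

Lemma J3_mull k f g : J3 k f -> J3 k (mul3 f g).
Proof.
move=> /J3_ev Jf; apply/J3_ev => x1 x2 x3 lx13.
have [x123|x123] := boolP (x1 <= x2 <= x3); last by rewrite ev_nchain.
rewrite ev_mul3 //; apply: big1 => y1 /andP[xy1 _]; apply: big1 => y2 /andP[_ yx2].
by rewrite Jf ?mul0r // (leq_ltn_trans (lenP_mono (lexx x1) yx2)).
Qed.

Lemma J3_mulr k f g : J3 k g -> J3 k (mul3 f g).
Proof.
move=> /J3_ev Jg; apply/J3_ev => x1 x2 x3 lx13.
have [x123|x123] := boolP (x1 <= x2 <= x3); last by rewrite ev_nchain.
rewrite ev_mul3 //; apply: big1 => y1 /andP[xy1 _]; apply: big1 => y2 /andP[_ yx2].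
by rewrite Jg ?mulr0 // (leq_ltn_trans (lenP_mono xy1 (lexx x3))).
Qed.

Lemma J3_bracket3 k u v : J3 k u -> J3 k (bracket3 u v).
Proof. by move=> Ju; apply: (submodB (J3_submod k)); [apply: J3_mull | apply: J3_mulr]. Qed.

Lemma brackets_J3 k (U V : I3 -> Prop) :
  (forall u, U u -> J3 k u) -> forall f, brackets U V f -> J3 k f.
Proof. by move=> JU; apply: brackets_min (J3_submod k) _ => u v /JU /J3_bracket3. Qed.

Lemma J3_1_diag f x : J3 1 f -> ev f x x x = 0.
Proof. by move/J3_ev; apply; rewrite lenPxx. Qed.

Definition balanced f :=
  forall p q, p < q -> (lenP p q < 2)%N -> ev f p p q = ev f p q q.

Lemma balanced_submod : submodule3 balanced.
Proof.
split=> [p q * | f g bf bg p q pq lpq | r f bf p q pq lpq]; first by rewrite !ev0.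
  by rewrite !evD bf ?bg.
by rewrite !evZ bf.
Qed.

Lemma ev_mul3_cover u v p q x : J3 1 u -> J3 1 v -> p < q -> (lenP p q < 2)%N ->
  p <= x <= q -> ev (mul3 u v) p x q = ev u p p q * ev v p q q.
Proof.
(* As [p, q] = {p, q}, the other terms contain a factor u(p,p,p) or v(q,q,q). *)
move=> Ju Jv pq lpq /andP[px xq]; rewrite ev_mul3 ?px ?xq // pair_big_dep /=.
rewrite (big_only1 (p, q)) ?lexx ?px ?xq // => -[y1 y2] /= ypq.
move=> /andP[/andP[py1 y1x] /andP[xy2 y2q]]; have y12 := le_trans y1x xy2.
have y1pq : p <= y1 <= q by rewrite py1 (le_trans y12 y2q).
have y2pq : p <= y2 <= q by rewrite y2q (le_trans py1 y12).
have /orP[/eqP y1p | /eqP y1q] := lenP_lt2_interval lpq y1pq.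
  have /orP[/eqP y2p | /eqP y2q'] := lenP_lt2_interval lpq y2pq.
    by rewrite y1p y2p J3_1_diag ?mul0r.
  by move: ypq; rewrite y1p y2q' eqxx.
have y2e : y2 = q by apply: le_anti; rewrite y2q -y1q y12.
by rewrite y1q y2e (J3_1_diag q Jv) mulr0.
Qed.

Lemma bracket3_balanced u v : J3 1 u -> J3 1 v -> balanced (bracket3 u v).
Proof.
move=> Ju Jv p q pq lpq; have ppq : p <= p <= q by rewrite lexx ltW.
have pqq : p <= q <= q by rewrite lexx ltW.
by rewrite !evB !ev_mul3_cover.
Qed.

Lemma bracket3_J3_2 u v : J3 1 u -> J3 1 v -> balanced u -> balanced v ->
  J3 2 (bracket3 u v).
Proof.
move=> Ju Jv bu bv; apply/J3_ev => x y z lxz.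
have [/andP[xy yz]|] := boolP (x <= y <= z); last exact: ev_nchain.
have [exz|nxz] := eqVneq x z.
  have eyx : y = x by apply: le_anti; rewrite xy exz yz.
  by rewrite -exz eyx J3_1_diag //; apply: J3_bracket3.
have xz : x < z by rewrite lt_def eq_sym nxz (le_trans xy yz).
by rewrite evB !ev_mul3_cover ?xy ?yz // bu // bv // mulrC subrr.
Qed.

Lemma Z3_2_J3_1 f : Z3_2 f -> J3 1 f.
Proof. exact: brackets_J3. Qed.

Lemma Z3_2_balanced f : Z3_2 f -> balanced f.
Proof. by move=> Zf; apply: (brackets_min balanced_submod _ Zf); apply: bracket3_balanced. Qed.

Lemma Z3_3_J3_2 f : Z3_3 f -> J3 2 f.
Proof.
move=> Zf; apply: (brackets_min (J3_submod 2) _ Zf) => u v Zu Zv.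
by apply: bracket3_J3_2; apply: Z3_2_J3_1 || apply: Z3_2_balanced.
Qed.

Definition indicator3 a (Y : pred P) c : I3 :=
  [ffun t => [&& (val t).1.1 == a, Y (val t).1.2 & (val t).2 == c]%:R].

Definition delta3 a b c := indicator3 a (pred1 b) c.
Definition full3 a c := indicator3 a predT c.

Lemma ev_indicator3 a Y c x y z :
  ev (indicator3 a Y c) x y z = [&& x == a, Y y, z == c & x <= y <= z]%:R.
Proof.
have [xyz|xyz] := boolP (x <= y <= z); last by rewrite ev_nchain ?andbF.
by rewrite ev_chain ffunE andbT.
Qed.

Lemma indicator3_ext a (Y W : pred P) c :
  (forall y, a <= y <= c -> Y y = W y) -> indicator3 a Y c = indicator3 a W c.
Proof.
move=> YW; apply: eq_ev => x y z xyz; rewrite !ev_indicator3 xyz !andbT.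
by have [ea|] := eqVneq x a; have [ec|] := eqVneq z c; rewrite ?andbF //= YW // -ea -ec.
Qed.

Lemma indicator3_eq0 a (Y : pred P) c :
  (forall y, a <= y <= c -> ~~ Y y) -> indicator3 a Y c = 0.
Proof.
move=> nY; apply: eq_ev => x y z xyz; rewrite ev0 ev_indicator3 xyz !andbT.
have [ea|] := eqVneq x a; have [ec|] := eqVneq z c; rewrite ?andbF //=.
by rewrite (negbTE (nY _ _)) // -ea -ec.
Qed.

Lemma indicator3_sum a (Y : pred P) c :
  indicator3 a Y c = \sum_(b | Y b) delta3 a b c.
Proof.
apply/ffunP => t; rewrite sum_ffunE ffunE big_mkcond (big_only1 (val t).1.2) //=.
  by rewrite ffunE /= eqxx; case: ifP; rewrite /= ?andbF.
by move=> b nb _; rewrite ffunE /= (eq_sym _ b) (negbTE nb) !andbF if_same.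
Qed.

Lemma indicator3_J3 k a (Y : pred P) c : (k <= lenP a c)%N -> J3 k (indicator3 a Y c).
Proof.
move=> kac t ltk; rewrite ffunE.
case: eqP => [ea|]; case: eqP => [ec|]; rewrite ?andbF //.
by move: ltk; rewrite ea ec ltnNge kac.
Qed.

Lemma mul3_indicator3 a (Y : pred P) b b' (W : pred P) c :
  mul3 (indicator3 a Y b) (indicator3 b' W c) =
  indicator3 a (fun y => [&& a <= b' <= y, y <= b <= c, Y b' & W b]) c.
Proof.
apply: eq_ev => x1 x2 x3 x123; rewrite ev_mul3 // pair_big_dep /= big_mkcond.
rewrite (big_only1 (b', b)) //= => [|[y1 y2] /= nyb _]; last first.
  case: ifP => // _; rewrite !ev_indicator3 -natrM mulnb.
  by move: nyb; rewrite xpair_eqE negb_and => /orP[]/negbTE->; rewrite ?andbF.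
rewrite !ev_indicator3 -natrM mulnb x123 !eqxx !andbT.
case: (eqVneq x1 a) => [->|]; case: (eqVneq x3 c) => [->|]; rewrite ?andbF ?if_same //=.
case: ifP => [/and3P[/andP[ab' b'x2] x2b bc] | nc]; last by rewrite andbA nc.
by rewrite ab' b'x2 x2b bc (le_trans b'x2 x2b) !andbT.
Qed.

Lemma bracket3_delta3_delta3 p s :
  p < s -> bracket3 (delta3 p p s) (delta3 p s s) = full3 p s.
Proof.
move=> ps; rewrite /bracket3 /delta3 /full3 !mul3_indicator3.
rewrite [X in _ - X]indicator3_eq0 ?subr0 => [|y _]; last first.
  by rewrite /= (lt_eqF ps) !andbF.
by apply: indicator3_ext => y /andP[py ys]; rewrite /= !eqxx !lexx py ys.
Qed.

Lemma bracket3_full3_full3 a b c : a < b -> b < c ->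
  bracket3 (full3 a b) (full3 b c) = delta3 a b c.
Proof.
move=> ab bc; rewrite /bracket3 /delta3 /full3 !mul3_indicator3.
rewrite [X in _ - X]indicator3_eq0 ?subr0 => [|y _]; last by rewrite /= lt_geF.
apply: indicator3_ext => y _; rewrite /= (ltW ab) (ltW bc) !andbT.
by rewrite andbC eq_le.
Qed.

Lemma bracket3_full3_delta3 a b c : a < b -> b < c ->
  bracket3 (full3 a b) (delta3 a b c) = indicator3 a (fun y => a <= y <= b) c.
Proof.
move=> ab bc; rewrite /bracket3 /delta3 /full3 !mul3_indicator3.
rewrite [X in _ - X]indicator3_eq0 ?subr0 => [|y _]; last first.
  by rewrite /= (lt_geF bc) !andbF.
by apply: indicator3_ext => y /andP[ay _]; rewrite /= lexx ay (ltW bc) eqxx !andbT.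
Qed.

Lemma bracket3_delta3_full3 a b c : a < b -> b < c ->
  bracket3 (delta3 a b c) (full3 b c) = indicator3 a (fun y => b <= y <= c) c.
Proof.
move=> ab bc; rewrite /bracket3 /delta3 /full3 !mul3_indicator3.
rewrite [X in _ - X]indicator3_eq0 ?subr0 => [|y _]; last by rewrite /= (lt_geF ab).
by apply: indicator3_ext => y /andP[_ yc]; rewrite /= lexx yc (ltW ab) eqxx !andbT.
Qed.

Lemma full3_Z3_2 a c : a < c -> Z3_2 (full3 a c).
Proof.
move=> ac; rewrite -bracket3_delta3_delta3 //.
by apply: brackets_bracket3; apply: indicator3_J3; apply: lenP_gt0.
Qed.

Lemma delta3_Z3_2 a b c : a < b -> b < c -> Z3_2 (delta3 a b c).
Proof.
move=> ab bc; rewrite -bracket3_full3_full3 //.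
by apply: brackets_bracket3; apply: indicator3_J3; apply: lenP_gt0.
Qed.

Lemma delta3_Z3_3_strict a b c : a < b < c -> Z3_3 (delta3 a b c).
Proof.
move=> /andP[ab bc]; rewrite -bracket3_full3_full3 //.
by apply: brackets_bracket3; apply: full3_Z3_2.
Qed.

Lemma Z3_3_submod : submodule3 (@Z3_3 _ P R).
Proof. exact: brackets_submod. Qed.

Lemma delta3_Z3_3_left a c : (2 <= lenP a c)%N -> Z3_3 (delta3 a a c).
Proof.
move=> /lenP_ge2P[b /andP[ab bc]].
apply: (submod_sum_term Z3_3_submod (C := fun y => a <= y <= b)
                                    (F := fun y => delta3 a y c)).
- by rewrite lexx ltW.
- rewrite -indicator3_sum -bracket3_full3_delta3 //.
  by apply: brackets_bracket3; [apply: full3_Z3_2 | apply: delta3_Z3_2].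
- move=> y /andP[ay yb] nya; apply: delta3_Z3_3_strict.
  by rewrite lt_def nya ay (le_lt_trans yb bc).
Qed.

Lemma delta3_Z3_3_right a c : (2 <= lenP a c)%N -> Z3_3 (delta3 a c c).
Proof.
move=> /lenP_ge2P[b /andP[ab bc]].
apply: (submod_sum_term Z3_3_submod (C := fun y => b <= y <= c)
                                    (F := fun y => delta3 a y c)).
- by rewrite lexx ltW.
- rewrite -indicator3_sum -bracket3_delta3_full3 //.
  by apply: brackets_bracket3; [apply: delta3_Z3_2 | apply: full3_Z3_2].
- move=> y /andP[b_y yc] nyc; apply: delta3_Z3_3_strict.
  by rewrite (lt_le_trans ab b_y) lt_def eq_sym nyc yc.
Qed.

Lemma delta3_Z3_3 a y c : a <= y <= c -> (2 <= lenP a c)%N -> Z3_3 (delta3 a y c).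
Proof.
move=> /andP[ay yc] lac.
have [->|nya] := eqVneq y a; first exact: delta3_Z3_3_left.
have [->|nyc] := eqVneq y c; first exact: delta3_Z3_3_right.
by apply: delta3_Z3_3_strict; rewrite !lt_def nya ay yc eq_sym nyc.
Qed.

Lemma delta3_decomp f :
  f = \sum_(t : chain3 P) scale3 (f t) (delta3 (val t).1.1 (val t).1.2 (val t).2).
Proof.
apply/ffunP => u; rewrite sum_ffunE (big_only1 u) // => [|t ntu _]; rewrite !ffunE /=.
  by rewrite !eqxx mulr1.
by rewrite andbA -!xpair_eqE -!surjective_pairing val_eqE eq_sym (negbTE ntu) mulr0.
Qed.

Lemma J3_2_Z3_3 f : J3 2 f -> Z3_3 f.
Proof.
move=> Jf; rewrite (delta3_decomp f); apply: (submod_sum Z3_3_submod) => t _.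
have [lt2|ge2] := ltnP (lenP (val t).1.1 (val t).2) 2.
  rewrite Jf //; set e := delta3 _ _ _.
  suff -> : scale3 0 e = 0 by apply: submod0 Z3_3_submod.
  by apply/ffunP => u; rewrite !ffunE mul0r.
by apply: (submodZ Z3_3_submod); apply: delta3_Z3_3 (valP t) ge2.
Qed.

End Incidence3.

Theorem lemma2p6 (d : Order.disp_t) (P : finPOrderType d) (R : comPzRingType) :
  (forall f : I3 P R, Z3_3 f <-> J3 2 f) /\
  (* Z^3_3(P,R) is an ideal of I^3(P,R) *)
  (Z3_3 (0 : I3 P R) /\
   (forall f g : I3 P R, Z3_3 f -> Z3_3 g -> Z3_3 (f + g)) /\
   (forall (r : R) (f : I3 P R), Z3_3 f -> Z3_3 (scale3 r f)) /\
   (forall f g : I3 P R, Z3_3 f -> Z3_3 (mul3 f g) /\ Z3_3 (mul3 g f))).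
Proof.
have [Z3_0 Z3_D Z3_Z] := @Z3_3_submod _ P R.
split=> [f | ]; first by split; [apply: Z3_3_J3_2 | apply: J3_2_Z3_3].
do 3!split => //.
by move=> f g /Z3_3_J3_2 Jf; split; apply: J3_2_Z3_3; [apply: J3_mull | apply: J3_mulr].
Qed.
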